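(* Let $Y$ be a conformal Killing vector field of $g$, $\mathcal L_Y g_{\mu\nu}=2\omega(\mathrm{x})g_{\mu\nu}$. Let $(\mathrm{x}(\lambda),n(\lambda))$ be a solution of the Euler–Lagrange equations of $L$, fix $\lambda_0$, and set $W(\lambda)=\int_{\lambda_0}^{\lambda}n(s)\,\omega(\mathrm{x}(s))\,ds$. Then: (i) the non-local quantity $I(\lambda)=Y^\mu p_\mu+m^2W(\lambda)$ is constant along the solution; (ii) the non-local vector field $X=\left(Y^\mu-\frac{\dot{\mathrm{x}}^\mu}{n}W\right)\frac{\partial}{\partial\mathrm{x}^\mu}$, whose first prolongation $\mathrm{pr}^{(1)}X=X+\frac{dX^\mu}{d\lambda}\frac{\partial}{\partial\dot{\mathrm{x}}^\mu}$ is evaluated along the solution (using the equations of motion to eliminate accelerations), satisfies $\mathrm{pr}^{(1)}X(L)=0$, so that $X$ is a (non-local) Noether symmetry with constant surface term whose Noether charge is $I$.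
   Context: $(\mathcal M,g)$ is a pseudo-Riemannian manifold. Geodesic system: for a curve $\mathrm{x}^\mu(\lambda)$ and a positive function $n(\lambda)$ (the einbein), $L=\frac{1}{2n}g_{\mu\nu}\dot{\mathrm{x}}^\mu\dot{\mathrm{x}}^\nu-\frac{m^2}{2}n$ with $m$ a constant; its Euler–Lagrange equations are equivalent to $\ddot{\mathrm{x}}^\mu+\Gamma^\mu_{\kappa\lambda}\dot{\mathrm{x}}^\kappa\dot{\mathrm{x}}^\lambda=\dot{\mathrm{x}}^\mu\frac{d}{d\lambda}\ln n$ together with $\frac{1}{n^2}g_{\mu\nu}\dot{\mathrm{x}}^\mu\dot{\mathrm{x}}^\nu+m^2=0$. Momenta: $p_\mu=\frac1n g_{\mu\nu}\dot{\mathrm{x}}^\nu$. *)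

From HB Require Import structures.
From mathcomp Require Import all_boot all_order all_algebra.
From mathcomp Require Import all_classical all_reals all_analysis.
Set Implicit Arguments. Unset Strict Implicit. Unset Printing Implicit Defensive.
Import Order.TTheory GRing.Theory Num.Theory.
Import numFieldNormedType.Exports.
Local Open Scope classical_set_scope.
Local Open Scope ring_scope.

Section Geo.
Variables (R : realType) (N : nat).

(* Points of a coordinate chart: row vectors in R^N; coordinates x 0 mu. *)
Definition xcomp (x : 'rV[R]_N) (mu : 'I_N) : R := x ord0 mu.

Definition evec (mu : 'I_N) : 'rV[R]_N := delta_mx ord0 mu.

Definition pder (f : 'rV[R]_N -> R) (mu : 'I_N) (x : 'rV[R]_N) : R :=
  derive f x (evec mu).

Definition lie_metric (g : 'I_N -> 'I_N -> 'rV[R]_N -> R)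
  (Y : 'I_N -> 'rV[R]_N -> R) (mu nu : 'I_N) (x : 'rV[R]_N) : R :=
  \sum_k (Y k x * pder (g mu nu) k x
          + g k nu x * pder (Y k) mu x
          + g mu k x * pder (Y k) nu x).

Definition Lag (g : 'I_N -> 'I_N -> 'rV[R]_N -> R) (m : R)
  (x v : 'rV[R]_N) (n : R) : R :=
  (2 * n)^-1 * (\sum_mu \sum_nu g mu nu x * xcomp v mu * xcomp v nu)
  - m ^+ 2 / 2 * n.

Definition dL_dx g m (mu : 'I_N) x v n : R := pder (fun y => Lag g m y v n) mu x.
Definition dL_dv g m (mu : 'I_N) x v n : R := pder (fun w => Lag g m x w n) mu v.
Definition dL_dn g m x v (n : R) : R := derive1 (fun s => Lag g m x v s) n.

Definition momentum (g : 'I_N -> 'I_N -> 'rV[R]_N -> R) (mu : 'I_N)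
  (x v : 'rV[R]_N) (n : R) : R :=
  n^-1 * \sum_nu g mu nu x * xcomp v nu.

Definition oint (f : R -> R) (a b : R) : R :=
  if a <= b then Rintegral (@lebesgue_measure R) `[a, b] f
  else - Rintegral (@lebesgue_measure R) `[b, a] f.

End Geo.

From HB Require Import structures.
From mathcomp Require Import all_boot all_order all_algebra.
From mathcomp Require Import all_classical all_reals all_analysis.
From mathcomp Require Import ring lra.
Import Order.TTheory GRing.Theory Num.Theory.
Import numFieldNormedType.Exports.
Local Open Scope classical_set_scope.
Local Open Scope ring_scope.

(** Along a solution the Euler-Lagrange equations give [dp_mu/dl = dL/dx^mu], hence
    [d(Y^mu p_mu)/dl = Y^mu dL/dx^mu + p_mu dY^mu/dl = (L_Y g)(xdot, xdot) / (2n)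
    = omega g(xdot, xdot) / n], and the constraint [dL/dn = 0], i.e.
    [g(xdot, xdot) = - m^2 n^2], turns this into [- m^2 n omega = - m^2 dW/dl]:
    [I] is constant.  The same constraint gives [xdot^mu p_mu = - m^2 n], so the
    Noether charge [X^mu p_mu] of the non-local field [X] is exactly [I], and
    differentiating [X^mu p_mu] with the Euler-Lagrange equations produces
    [pr X (L)], which therefore vanishes. *)

Set Implicit Arguments. Unset Strict Implicit. Unset Printing Implicit Defensive.

Section DeriveFun.
Variables (R : numFieldType) (V : normedModType R).
Implicit Types (f h : V -> R) (x v : V).

Lemma is_derive_cst_fun x v (c : R) : is_derive x v (fun _ : V => c : R) 0.
Proof. exact: is_derive_cst. Qed.

Lemma is_deriveD_fun f h x v df dh : is_derive x v f df -> is_derive x v h dh ->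
  is_derive x v (fun y => f y + h y) (df + dh).
Proof. exact: is_deriveD. Qed.

Lemma is_deriveB_fun f h x v df dh : is_derive x v f df -> is_derive x v h dh ->
  is_derive x v (fun y => f y - h y) (df - dh).
Proof. exact: is_deriveB. Qed.

Lemma is_deriveM_fun f h x v df dh : is_derive x v f df -> is_derive x v h dh ->
  is_derive x v (fun y => f y * h y) (f x * dh + h x * df).
Proof. exact: is_deriveM. Qed.

Lemma is_deriveV_fun f x v df : f x != 0 -> is_derive x v f df ->
  is_derive x v (fun y => (f y)^-1) (- (f x) ^- 2 * df).
Proof.
move=> fx0 [derf <-]; apply: DeriveDef; first exact: derivableV.
by rewrite deriveV.
Qed.

Lemma is_derive_sum_fun n (h : 'I_n -> V -> R) x v (dh : 'I_n -> R) :
  (forall i, is_derive x v (h i) (dh i)) ->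
  is_derive x v (fun y => \sum_(i < n) h i y) (\sum_(i < n) dh i).
Proof. by move=> H; rewrite -fct_sumE; exact: is_derive_sum. Qed.

Lemma is_derive_differentiable f x v : differentiable f x -> is_derive x v f ('D_v f x).
Proof. by move=> df; apply: derivableP; exact: diff_derivable. Qed.

End DeriveFun.

Lemma is_derive_id_fun (R : numFieldType) (x : R) : is_derive x (1 : R) (fun h : R => h : R) 1.
Proof. exact: is_derive_id. Qed.

Lemma is_derive_affine (R : numFieldType) (x c d : R) :
  is_derive x 1 (fun h : R => h * c + d : R) c.
Proof.
apply: is_derive_eq.
by rewrite scaler0 add0r addr0 [_ *: _]mulr1.
Qed.

Lemma sum_mul_delta (R : pzSemiRingType) (I : finType) (F : I -> R) i :
  \sum_j F j * (j == i)%:R = F i.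
Proof.
rewrite (bigD1 i) //= eqxx mulr1 big1 ?addr0 // => j /negbTE ->.
by rewrite mulr0.
Qed.

Lemma mul_inv_double (R : numFieldType) (n s : R) : (2 * n)^-1 * (s + s) = n^-1 * s.
Proof. by rewrite invfM [2^-1 * _]mulrC -mulrA -mulr2n -(mulr_natl s) mulKf ?pnatr_eq0. Qed.

Section DeriveLine.
Variables (R : numFieldType) (V W : normedModType R).

Lemma derive_line (f : V -> W) x v :
  'D_v f x = 'D_1 (fun h : R => f (h *: v + x)) 0.
Proof.
rewrite /derive; congr lim.
suff -> : (fun h : R => h^-1 *: ((f \o shift x) (h *: v) - f x)) =
  (fun h : R => h^-1 *: (((fun k : R => f (k *: v + x)) \o shift 0) h%:A
                         - f (0 *: v + x))) by [].
by apply/funext => h /=; rewrite [h%:A]mulr1 addr0 scale0r add0r.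
Qed.

Lemma is_derive_line (f : V -> W) x v df :
  is_derive (0 : R) 1 (fun h : R => f (h *: v + x)) df -> is_derive x v f df.
Proof.
move=> [derf <-]; apply: DeriveDef; last by rewrite derive_line.
by apply/derivable1P.
Qed.

End DeriveLine.

Section Coordinates.
Variables (R : realType) (N : nat).

Lemma xcomp_line (h : R) mu (w : 'rV[R]_N) b :
  xcomp (h *: evec R mu + w) b = h * (b == mu)%:R + xcomp w b.
Proof. by rewrite /xcomp /evec !mxE eqxx. Qed.

Lemma pder_xcomp (k j : 'I_N) (w : 'rV[R]_N) :
  pder (fun y : 'rV[R]_N => xcomp y k) j w = (k == j)%:R.
Proof.
apply: derive_val; apply: is_derive_line.
under [X in is_derive _ _ X]funext do rewrite xcomp_line.
exact: is_derive_affine.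
Qed.

Lemma is_derive_comp_curve (F : 'rV[R]_N -> R) (c : R -> 'rV[R]_N) l :
  differentiable F (c l) -> derivable c l 1 ->
  is_derive l 1 (fun s => F (c s)) (\sum_k pder F k (c l) * xcomp (derive1 c l) k).
Proof.
move=> dF dc; have dc' : differentiable c l by exact/derivable1_diffP.
have dFc : differentiable (F \o c) l by exact: differentiable_comp.
apply: DeriveDef; first exact/derivable1_diffP.
rewrite (deriveE (f := F \o c)) // diff_comp //= -(deriveE (f := c)) // -derive1E.
rewrite {1}(row_sum_delta (derive1 c l)) linear_sum /=.
by apply: eq_bigr => k _; rewrite linearZ /= /pder deriveE // mulrC.
Qed.

Lemma is_derive_xcomp_curve (c : R -> 'rV[R]_N) l k : derivable c l 1 ->
  is_derive l 1 (fun s => xcomp (c s) k) (xcomp (derive1 c l) k).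
Proof.
move=> dc; apply: is_derive_eq.
  exact: is_derive_comp_curve (differentiable_coord _ _ _) dc.
by under eq_bigr do rewrite pder_xcomp mulrC eq_sym; rewrite sum_mul_delta.
Qed.

End Coordinates.

Section Lagrangian.
Variables (R : realType) (N : nat) (g : 'I_N -> 'I_N -> 'rV[R]_N -> R) (m : R).
Implicit Types (x w : 'rV[R]_N) (n : R).

Lemma dL_dvE mu x w n :
  dL_dv g m mu x w n = (2 * n)^-1 * \sum_b (g mu b x + g b mu x) * xcomp w b.
Proof.
apply: derive_val; apply: is_derive_line; rewrite /Lag.
under [X in is_derive _ _ X]funext do under eq_bigr do under eq_bigr do rewrite !xcomp_line.
apply: is_derive_eq.
  apply: is_deriveB_fun (is_derive_cst_fun _ _ _).
  apply: is_deriveM_fun (is_derive_cst_fun _ _ _) _.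
  by apply: is_derive_sum_fun => a; apply: is_derive_sum_fun.
rewrite /= mulr0 addr0 subr0; congr (_ * _).
under eq_bigr do under eq_bigr do
  rewrite !mul0r !add0r !scaler0 !add0r !addr0 ![_%:A]mulr1 -![_ *: _]/(_ * _).
under eq_bigr do rewrite big_split /= sum_mul_delta.
rewrite big_split /= [X in _ + X]exchange_big /=.
under [X in _ + X]eq_bigr do under eq_bigr do rewrite mulrA.
under [X in _ + X]eq_bigr do rewrite sum_mul_delta.
by rewrite -big_split; apply: eq_bigr => b _ /=; ring.
Qed.

Lemma dL_dv_momentum mu x w n : (forall a b, g a b x = g b a x) ->
  dL_dv g m mu x w n = momentum g mu x w n.
Proof.
move=> gsym; rewrite dL_dvE /momentum.
under eq_bigr => b _ do rewrite [g b mu x]gsym mulrDl.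
by rewrite big_split mul_inv_double.
Qed.

Lemma dL_dxE mu x w n : (forall a b, differentiable (g a b) x) ->
  dL_dx g m mu x w n =
  (2 * n)^-1 * \sum_a \sum_b pder (g a b) mu x * xcomp w a * xcomp w b.
Proof.
move=> dg; apply: derive_val; rewrite /Lag.
apply: is_derive_eq.
  apply: is_deriveB_fun (is_derive_cst_fun _ _ _).
  apply: is_deriveM_fun (is_derive_cst_fun _ _ _) _.
  apply: is_derive_sum_fun => a; apply: is_derive_sum_fun => b.
  exact: is_deriveM_fun (is_deriveM_fun (is_derive_differentiable _ (dg a b))
    (is_derive_cst_fun _ _ _)) (is_derive_cst_fun _ _ _).
rewrite mulr0 addr0 subr0; congr (_ * _).
by apply: eq_bigr => a _; apply: eq_bigr => b _; rewrite !mulr0 !add0r mulrC (mulrC (xcomp w a)).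
Qed.

Lemma dL_dn_eq0_mass_shell x w n : n != 0 -> dL_dn g m x w n = 0 ->
  \sum_a \sum_b g a b x * xcomp w a * xcomp w b = - (m ^+ 2 * n ^+ 2).
Proof.
move=> n0; rewrite /dL_dn derive1E /Lag; set Q := \sum_a _.
have dLag : is_derive n (1 : R) (fun s : R => (2 * s)^-1 * Q - m ^+ 2 / 2 * s)
    (- (2 * n) ^- 2 * 2 * Q - m ^+ 2 / 2).
  have n2 : 2 * n != 0 by rewrite mulf_neq0 ?pnatr_eq0.
  have d2s := is_deriveM_fun (is_derive_cst_fun n 1 2) (is_derive_id_fun n).
  have T := is_deriveB_fun (is_deriveM_fun (is_deriveV_fun n2 d2s) (is_derive_cst_fun n 1 Q))
    (is_deriveM_fun (is_derive_cst_fun n 1 (m ^+ 2 / 2)) (is_derive_id_fun n)).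
  apply: is_derive_eq T _.
  by rewrite !mulr0 !addr0 !mulr1 add0r mulrC.
rewrite derive_val => /eqP; rewrite subr_eq0 => /eqP dQ.
have -> : Q = - ((2 * n) ^+ 2 / 2) * (- (2 * n) ^- 2 * 2 * Q) by field.
by rewrite dQ; field.
Qed.

Lemma dL_dv_contract x w n :
  \sum_mu xcomp w mu * dL_dv g m mu x w n =
  n^-1 * \sum_a \sum_b g a b x * xcomp w a * xcomp w b.
Proof.
under eq_bigr do rewrite dL_dvE mulrCA mulr_sumr.
rewrite -mulr_sumr; under eq_bigr do (under eq_bigr do rewrite mulrDl mulrDr; rewrite big_split).
rewrite big_split /= [X in _ + X]exchange_big /=.
have -> : \sum_b \sum_mu xcomp w mu * (g b mu x * xcomp w b) =
          \sum_a \sum_b g a b x * xcomp w a * xcomp w b.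
  by apply: eq_bigr => a _; apply: eq_bigr => b _; ring.
have -> : \sum_mu \sum_b xcomp w mu * (g mu b x * xcomp w b) =
          \sum_a \sum_b g a b x * xcomp w a * xcomp w b.
  by apply: eq_bigr => a _; apply: eq_bigr => b _; ring.
by rewrite mul_inv_double.
Qed.

Lemma lie_metric_contract (Y : 'I_N -> 'rV[R]_N -> R) x w n :
  (forall a b, differentiable (g a b) x) ->
  \sum_mu (Y mu x * dL_dx g m mu x w n
           + dL_dv g m mu x w n * \sum_k pder (Y mu) k x * xcomp w k)
  = (2 * n)^-1 * \sum_a \sum_b lie_metric g Y a b x * xcomp w a * xcomp w b.
Proof.
move=> dg; rewrite /lie_metric.
under [X in _ = _ * X]eq_bigr do under eq_bigr do rewrite !mulr_suml.
under [X in _ = _ * X]eq_bigr do rewrite exchange_big /=.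
rewrite [X in _ = _ * X]exchange_big /= mulr_sumr; apply: eq_bigr => k _.
rewrite dL_dxE // dL_dvE.
under [X in (_ * X) * _]eq_bigr do rewrite mulrDl.
under [X in _ = _ * X]eq_bigr do under eq_bigr do rewrite !mulrDl.
under [X in _ = _ * X]eq_bigr do rewrite !big_split /=.
rewrite !big_split /=.
have -> : \sum_a \sum_b Y k x * pder (g a b) k x * xcomp w a * xcomp w b =
          Y k x * \sum_a \sum_b pder (g a b) k x * xcomp w a * xcomp w b.
  rewrite mulr_sumr; apply: eq_bigr => a _; rewrite mulr_sumr.
  by apply: eq_bigr => b _; rewrite !mulrA.
have -> : \sum_a \sum_b g k b x * pder (Y k) a x * xcomp w a * xcomp w b =
          (\sum_b g k b x * xcomp w b) * \sum_a pder (Y k) a x * xcomp w a.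
  rewrite big_distrlr exchange_big.
  by apply: eq_bigr => b _; apply: eq_bigr => a _ /=; ring.
have -> : \sum_a \sum_b g a k x * pder (Y k) b x * xcomp w a * xcomp w b =
          (\sum_a g a k x * xcomp w a) * \sum_b pder (Y k) b x * xcomp w b.
  by rewrite big_distrlr; apply: eq_bigr => a _; apply: eq_bigr => b _ /=; ring.
ring.
Qed.

End Lagrangian.

Section OrientedIntegral.
Variable R : realType.
Local Notation mu := (@lebesgue_measure R).

Lemma oint_split (F : R -> R) c u x t :
  mu.-integrable `[c, u] (EFin \o F) -> c <= x <= u -> c <= t <= u ->
  oint F x t = \int[mu]_(s in `[c, t]) F s - \int[mu]_(s in `[c, x]) F s.
Proof.
move=> iF /andP[cx xu] /andP[ct tu].
have itvB y z : c <= y -> y <= z -> z <= u ->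
    \int[mu]_(s in `[c, z]) F s - \int[mu]_(s in `[c, y]) F s =
    \int[mu]_(s in `[y, z]) F s.
  move=> cy yz zu.
  have iz : mu.-integrable `[c, z] (EFin \o F).
    by apply: integrableS iF => //; apply: subset_itv; rewrite bnd_simp.
  rewrite (@Rintegral_itvB _ F (BLeft c) (BRight z) y) ?bnd_simp //.
  rewrite Rintegral_itv_obnd_cbnd //.
  by apply: integrableS iz => //; apply: subset_itv; rewrite bnd_simp.
rewrite /oint; case: ifPn => xt; first by rewrite itvB.
by rewrite -itvB ?opprB // ltW // ltNge.
Qed.

Lemma is_derive_oint (F : R -> R) a b lam0 l : a < lam0 < b -> a < l < b ->
  (forall s, a < s < b -> {for s, continuous F}) ->
  is_derive l (1 : R) (oint F lam0) (F l).
Proof.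
move=> /andP[al0 l0b] /andP[al lb] cF.
set mn := Num.min lam0 l; set mx := Num.max lam0 l.
have mn_gt : a < mn by rewrite lt_min al0 al.
have mx_lt : mx < b by rewrite gt_max l0b lb.
have [mn_l0 mn_l] : mn <= lam0 /\ mn <= l by rewrite !ge_min !lexx ?orbT.
have [mx_l0 mx_l] : lam0 <= mx /\ l <= mx by rewrite !le_max !lexx ?orbT.
set c := (a + mn) / 2; set u := (mx + b) / 2.
have iF : mu.-integrable `[c, u] (EFin \o F).
  apply: continuous_compact_integrable; first exact: segment_compact.
  apply: continuous_in_subspaceT => s; rewrite inE /= in_itv /= => /andP[cs su].
  by apply: cF; apply/andP; split; rewrite /c /u in cs su; lra.
have [cl lu] : c < l /\ l < u by rewrite /c /u; split; lra.
have [dG G'] := continuous_FTC1_closed lu iF cl (cF l (introT andP (conj al lb))).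
have HG : is_derive l (1 : R) (fun t => \int[mu]_(s in `[c, t]) F s) (F l).
  by constructor; [exact: dG | rewrite -derive1E].
apply: near_eq_is_derive (is_derive_eq (is_deriveB_fun HG (is_derive_cst_fun _ _ _)) (subr0 _)).
have : \forall t \near l, t \in `]c, u[ by apply: near_in_itvoo; rewrite in_itv /= cl lu.
apply: filterS => t; rewrite in_itv /= => /andP[ct tu].
by rewrite (oint_split iF) //; apply/andP; split; rewrite /c /u in ct tu *; lra.
Qed.

End OrientedIntegral.

Lemma is_derive0_itvoo_cst (R : realType) (f : R -> R) (a b : R) :
  (forall l, a < l < b -> is_derive l (1 : R) f 0) ->
  forall x y, a < x < b -> a < y < b -> f x = f y.
Proof.
move=> f'0 x y; wlog xy : x y / x <= y.
  by move=> H hx hy; case: (leP x y) => [/H|/ltW /H] => ->.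
move=> /andP[ax _] /andP[_ yb].
have in_ab z : x <= z <= y -> a < z < b.
  by case/andP => xz zy; apply/andP; split; lra.
have f'xy z : z \in `]x, y[ -> is_derive z (1 : R) f 0.
  by rewrite in_itv /= => /andP[xz zy]; apply: f'0; apply: in_ab; rewrite !ltW.
have cf : {within `[x, y], continuous f}.
  apply: continuous_in_subspaceT => z; rewrite inE /= in_itv /= => /in_ab/f'0 [dz _].
  exact/differentiable_continuous/derivable1_diffP.
have [c _ fxy] := MVT_segment xy f'xy cf.
by move/eqP: fxy; rewrite mul0r subr_eq0 => /eqP.
Qed.

Section ConformalKillingCharge.
Variables (R : realType) (N : nat) (U : set 'rV[R]_N)
  (g : 'I_N -> 'I_N -> 'rV[R]_N -> R) (Y : 'I_N -> 'rV[R]_N -> R)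
  (omega : 'rV[R]_N -> R) (m : R) (xc : R -> 'rV[R]_N) (nn : R -> R)
  (a b lam0 : R).
Hypotheses (openU : open U)
  (g_sym : forall x, U x -> forall mu nu, g mu nu x = g nu mu x)
  (g_diff : forall x, U x -> forall mu nu, differentiable (g mu nu) x)
  (Y_diff : forall x, U x -> forall mu, differentiable (Y mu) x)
  (omega_cont : {within U, continuous omega})
  (Y_conformal : forall x, U x -> forall mu nu,
      lie_metric g Y mu nu x = 2 * omega x * g mu nu x)
  (lam0_in : a < lam0 < b)
  (xc_in : forall l, a < l < b -> U (xc l))
  (xc_der : forall l, a < l < b -> derivable xc l 1)
  (xc_der2 : forall l, a < l < b -> derivable (derive1 xc) l 1)
  (nn_der : forall l, a < l < b -> derivable nn l 1)
  (nn_gt0 : forall l, a < l < b -> 0 < nn l)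
  (euler_lagrange : forall l, a < l < b -> forall mu,
      derive1 (fun s => dL_dv g m mu (xc s) (derive1 xc s) (nn s)) l
      = dL_dx g m mu (xc l) (derive1 xc l) (nn l))
  (mass_shell : forall l, a < l < b ->
      dL_dn g m (xc l) (derive1 xc l) (nn l) = 0).

Local Notation v := (derive1 xc).

Definition canonical_momentum mu l := dL_dv g m mu (xc l) (v l) (nn l).

Definition nonlocal_W l := oint (fun s => nn s * omega (xc s)) lam0 l.

Definition nonlocal_charge l :=
  \sum_mu Y mu (xc l) * momentum g mu (xc l) (v l) (nn l) + m ^+ 2 * nonlocal_W l.

Definition nonlocal_field mu l := Y mu (xc l) - xcomp (v l) mu / nn l * nonlocal_W l.

Lemma nn_neq0 l : a < l < b -> nn l != 0.
Proof. by move=> hl; rewrite gt_eqF // nn_gt0. Qed.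

Lemma momentum_canonical l mu : a < l < b ->
  momentum g mu (xc l) (v l) (nn l) = canonical_momentum mu l.
Proof. by move=> hl; rewrite /canonical_momentum dL_dv_momentum //; exact: g_sym (xc_in hl). Qed.

Lemma velocity_canonical_momentum l : a < l < b ->
  \sum_mu xcomp (v l) mu * canonical_momentum mu l = - (m ^+ 2 * nn l).
Proof.
move=> hl; have n0 := nn_neq0 hl.
by rewrite /canonical_momentum dL_dv_contract (dL_dn_eq0_mass_shell n0 (mass_shell hl)); field.
Qed.

Lemma nonlocal_chargeE l : a < l < b ->
  \sum_mu nonlocal_field mu l * canonical_momentum mu l = nonlocal_charge l.
Proof.
move=> hl; rewrite /nonlocal_field /nonlocal_charge.
under eq_bigr do rewrite mulrBl -momentum_canonical //.
rewrite sumrB; congr (_ + _).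
have -> : \sum_mu xcomp (v l) mu / nn l * nonlocal_W l * momentum g mu (xc l) (v l) (nn l)
    = nonlocal_W l / nn l * \sum_mu xcomp (v l) mu * canonical_momentum mu l.
  by rewrite mulr_sumr; apply: eq_bigr => mu _; rewrite momentum_canonical //; ring.
by rewrite velocity_canonical_momentum //; field; exact: nn_neq0.
Qed.

Lemma is_derive_nonlocal_W l : a < l < b ->
  is_derive l (1 : R) nonlocal_W (nn l * omega (xc l)).
Proof.
move=> hl; apply: is_derive_oint lam0_in hl _ => s hs.
have omega_cont' : {in U, continuous omega} by rewrite -continuous_open_subspace.
apply: continuousM; first exact/differentiable_continuous/derivable1_diffP/nn_der.
apply: continuous_comp; first exact/differentiable_continuous/derivable1_diffP/xc_der.
by apply: omega_cont'; rewrite inE; exact: xc_in.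
Qed.

Lemma is_derive_canonical_momentum l mu : a < l < b ->
  is_derive l (1 : R) (canonical_momentum mu) (dL_dx g m mu (xc l) (v l) (nn l)).
Proof.
move=> hl; apply: DeriveDef; last by rewrite -derive1E; exact: euler_lagrange.
have -> : canonical_momentum mu = fun s =>
    (2 * nn s)^-1 * \sum_nu (g mu nu (xc s) + g nu mu (xc s)) * xcomp (v s) nu.
  by apply/funext => s; exact: dL_dvE.
have dg nu rho := is_derive_comp_curve (g_diff (xc_in hl) nu rho) (xc_der hl).
have n2 : 2 * nn l != 0 by rewrite mulf_neq0 ?pnatr_eq0 ?nn_neq0.
have dv nu := is_derive_xcomp_curve nu (xc_der2 hl).
have d2n := is_deriveM_fun (is_derive_cst_fun l 1 2) (derivableP (nn_der hl)).
have := is_deriveM_fun (is_deriveV_fun (f := fun s => 2 * nn s) n2 d2n)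
  (is_derive_sum_fun (fun nu => is_deriveM_fun (is_deriveD_fun (dg mu nu) (dg nu mu)) (dv nu))).
by case.
Qed.

Lemma is_derive_nonlocal_charge l : a < l < b -> is_derive l (1 : R) nonlocal_charge 0.
Proof.
move=> hl; have n0 := nn_neq0 hl.
have dY mu := is_derive_comp_curve (Y_diff (xc_in hl) mu) (xc_der hl).
have dI := is_deriveD_fun
  (is_derive_sum_fun (fun mu => is_deriveM_fun (dY mu) (is_derive_canonical_momentum mu hl)))
  (is_deriveM_fun (is_derive_cst_fun l 1 (m ^+ 2)) (is_derive_nonlocal_W hl)).
apply: near_eq_is_derive (is_derive_eq dI _).
  have : \forall t \near l, t \in `]a, b[ by apply: near_in_itvoo; rewrite in_itv.
  apply: filterS => t; rewrite in_itv /= => ht; rewrite /nonlocal_charge.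
  by congr (_ + _); apply: eq_bigr => mu _; rewrite momentum_canonical.
rewrite /canonical_momentum lie_metric_contract; last exact: g_diff (xc_in hl).
have -> : \sum_mu \sum_nu lie_metric g Y mu nu (xc l) * xcomp (v l) mu * xcomp (v l) nu =
    2 * omega (xc l) * \sum_mu \sum_nu g mu nu (xc l) * xcomp (v l) mu * xcomp (v l) nu.
  rewrite mulr_sumr; apply: eq_bigr => mu _; rewrite mulr_sumr; apply: eq_bigr => nu _.
  by rewrite (Y_conformal (xc_in hl)) !mulrA.
by rewrite (dL_dn_eq0_mass_shell n0 (mass_shell hl)); field.
Qed.

Lemma nonlocal_charge_const l : a < l < b -> nonlocal_charge l = nonlocal_charge lam0.
Proof. by move=> hl; apply: is_derive0_itvoo_cst is_derive_nonlocal_charge _ _ hl lam0_in. Qed.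

Lemma derivable_nonlocal_field l (mu : 'I_N) : a < l < b -> derivable (nonlocal_field mu) l 1.
Proof.
move=> hl; have := is_deriveB_fun
  (is_derive_comp_curve (Y_diff (xc_in hl) mu) (xc_der hl))
  (is_deriveM_fun (is_deriveM_fun (is_derive_xcomp_curve mu (xc_der2 hl))
     (is_deriveV_fun (nn_neq0 hl) (derivableP (nn_der hl)))) (is_derive_nonlocal_W hl)).
by case.
Qed.

Lemma prolongation_Lag_eq0 l : a < l < b ->
  \sum_mu (nonlocal_field mu l * dL_dx g m mu (xc l) (v l) (nn l)
           + derive1 (nonlocal_field mu) l * dL_dv g m mu (xc l) (v l) (nn l)) = 0.
Proof.
move=> hl.
have dXp := is_derive_sum_fun (fun mu => is_deriveM_fun
  (derivableP (derivable_nonlocal_field (mu := mu) hl)) (is_derive_canonical_momentum mu hl)).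
have dXp0 : is_derive l (1 : R) (fun s => \sum_mu nonlocal_field mu s * canonical_momentum mu s) 0.
  apply: near_eq_is_derive (is_derive_nonlocal_charge hl).
  have : \forall t \near l, t \in `]a, b[ by apply: near_in_itvoo; rewrite in_itv.
  by apply: filterS => t; rewrite in_itv /= => ht; rewrite nonlocal_chargeE.
rewrite -[RHS](@derive_val _ _ _ _ _ _ _ dXp0) (@derive_val _ _ _ _ _ _ _ dXp).
apply: eq_bigr => mu _.
by congr (_ + _); rewrite -derive1E mulrC.
Qed.

Lemma nonlocal_noether_symmetry :
  (forall l, a < l < b -> nonlocal_charge l = nonlocal_charge lam0) /\
  (forall l, a < l < b ->
     \sum_mu (nonlocal_field mu l * dL_dx g m mu (xc l) (v l) (nn l)
              + derive1 (nonlocal_field mu) l * dL_dv g m mu (xc l) (v l) (nn l)) = 0) /\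
  (forall l, a < l < b ->
     \sum_mu nonlocal_field mu l * dL_dv g m mu (xc l) (v l) (nn l) = nonlocal_charge l).
Proof.
split; [|split] => l hl;
  [exact: nonlocal_charge_const | exact: prolongation_Lag_eq0 | exact: nonlocal_chargeE].
Qed.

End ConformalKillingCharge.

Unset Implicit Arguments.

Theorem mainTheorem3 (R : realType) (N : nat)
  (U : set 'rV[R]_N)
  (g : 'I_N -> 'I_N -> 'rV[R]_N -> R)
  (Y : 'I_N -> 'rV[R]_N -> R) (omega : 'rV[R]_N -> R) (m : R)
  (xc : R -> 'rV[R]_N) (nn : R -> R) (a b lam0 : R) :
  (* chart domain and pseudo-Riemannian metric on it *)
  open U ->
  (forall x, U x -> forall mu nu, g mu nu x = g nu mu x) ->
  (forall x, U x -> \det (\matrix_(i, j) g i j x) != 0) ->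
  (forall x, U x -> forall mu nu, differentiable (g mu nu) x) ->
  (* conformal Killing vector field Y with conformal factor omega *)
  (forall x, U x -> forall mu, differentiable (Y mu) x) ->
  {within U, continuous omega} ->
  (forall x, U x -> forall mu nu,
      lie_metric g Y mu nu x = 2 * omega x * g mu nu x) ->
  (* the solution (x(lam), n(lam)) on the interval ]a, b[ *)
  a < lam0 < b ->
  (forall l, a < l < b -> U (xc l)) ->
  (forall l, a < l < b -> derivable xc l 1) ->
  (forall l, a < l < b -> derivable (derive1 xc) l 1) ->
  (forall l, a < l < b -> derivable nn l 1) ->
  (forall l, a < l < b -> 0 < nn l) ->
  (* Euler-Lagrange equations of L *)
  (forall l, a < l < b -> forall mu,
      derive1 (fun s => dL_dv g m mu (xc s) (derive1 xc s) (nn s)) l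
      = dL_dx g m mu (xc l) (derive1 xc l) (nn l)) ->
  (forall l, a < l < b -> dL_dn g m (xc l) (derive1 xc l) (nn l) = 0) ->
  let W := fun l => oint (fun s => nn s * omega (xc s)) lam0 l in
  let I := fun l => \sum_mu Y mu (xc l) * momentum g mu (xc l) (derive1 xc l) (nn l)
                    + m ^+ 2 * W l in
  let X := fun (mu : 'I_N) l =>
             Y mu (xc l) - xcomp (derive1 xc l) mu / nn l * W l in
  (* (i) I is constant along the solution *)
  (forall l, a < l < b -> I l = I lam0) /\
  (* (ii) pr^(1) X (L) = 0 along the solution *)
  (forall l, a < l < b ->
     \sum_mu (X mu l * dL_dx g m mu (xc l) (derive1 xc l) (nn l)
              + derive1 (X mu) l * dL_dv g m mu (xc l) (derive1 xc l) (nn l)) = 0) /\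
  (* ... and the associated Noether charge X^mu dL/dxdot^mu equals I *)
  (forall l, a < l < b ->
     \sum_mu X mu l * dL_dv g m mu (xc l) (derive1 xc l) (nn l) = I l).
Proof.
move=> openU g_sym _ g_diff Y_diff omega_cont Y_conformal lam0_in xc_in xc_der xc_der2
  nn_der nn_gt0 euler_lagrange mass_shell.
exact: (nonlocal_noether_symmetry openU g_sym g_diff Y_diff omega_cont Y_conformal
  lam0_in xc_in xc_der xc_der2 nn_der nn_gt0 euler_lagrange mass_shell).
Qed.
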